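(* Let $\{\theta_k\}_{k=0}^\infty$ be the positive sequence with $\theta_0=1$ and $\theta_{k+1}^2-\theta_{k+1}-\theta_k^2=0$ for $k=0,1,\dots$. Then there exists a real constant $\zeta$ (numerically $\zeta\approx0.646$) such that \[ \theta_k=\frac{k+\zeta+1}{2}+\frac{\log k}{4}+o(1)\quad\text{as }k\to\infty. \]
   Context: $\log$ is the natural logarithm. *)

From Stdlib Require Import Reals.
From Coquelicot Require Import Coquelicot.

(** Writing [d k = theta (k+1) - theta k - 1/2], the recurrence factors as
    [d k * (theta k + theta (k+1) - 1/2) = 1/4], which gives
    [1 + k/2 <= theta k <= k/2 + sqrt (k+1)].  The error
    [e k = theta k - (k+1)/2 - ln k / 4] then changes by
    [d k - (ln (k+1) - ln k) / 4]; this is [<= 0] since [ln (k+1) - ln k >= 1/(k+1)],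
    and [>= - C k^(-3/2)], which telescopes against [6 / sqrt k].  So [e] is
    decreasing and bounded below, and [zeta] is twice its limit. *)

From Stdlib Require Import Reals Lra Psatz.
From Coquelicot Require Import Coquelicot.
Open Scope R_scope.

Lemma ln_le_sub1 (x : R) : 0 < x -> ln x <= x - 1.
Proof. intros Hx. pose proof (exp_ineq1_le (ln x)) as H. rewrite exp_ln in H; lra. Qed.

Lemma ln_succ_sub_bounds (x : R) : 0 < x ->
  1 / (x + 1) <= ln (x + 1) - ln x <= 1 / x.
Proof.
  intros Hx. split.
  - assert (H := ln_le_sub1 (x / (x + 1)) ltac:(apply Rdiv_lt_0_compat; lra)).
    rewrite ln_div in H by lra.
    replace (x / (x + 1) - 1) with (- (1 / (x + 1))) in H by (field; lra). lra.
  - assert (H := ln_le_sub1 ((x + 1) / x) ltac:(apply Rdiv_lt_0_compat; lra)).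
    rewrite ln_div in H by lra.
    replace ((x + 1) / x - 1) with (1 / x) in H by (field; lra). lra.
Qed.

Lemma sqrt_succ_sub (x : R) : 0 <= x ->
  sqrt (x + 1) - sqrt x = 1 / (sqrt (x + 1) + sqrt x).
Proof.
  intros Hx.
  pose proof (sqrt_sqrt x Hx). pose proof (sqrt_sqrt (x + 1) ltac:(lra)).
  pose proof (sqrt_pos x). assert (0 < sqrt (x + 1)) by (apply sqrt_lt_R0; lra).
  apply (Rmult_eq_reg_r (sqrt (x + 1) + sqrt x)); [|lra].
  field_simplify; lra.
Qed.

Lemma sqrt_succ_sub_ge (x : R) : 0 <= x ->
  1 / (4 * (x + 1)) <= sqrt (x + 1) - sqrt x.
Proof.
  intros Hx. rewrite sqrt_succ_sub by lra.
  pose proof (sqrt_sqrt (x + 1) ltac:(lra)).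
  assert (sqrt x <= sqrt (x + 1)) by (apply sqrt_le_1_alt; lra).
  pose proof (sqrt_pos x). pose proof (sqrt_pos (x + 1)).
  assert (1 <= sqrt (x + 1)) by nra. unfold Rdiv.
  apply Rmult_le_compat_l; [lra|]. apply Rinv_le_contravar; nra.
Qed.

Lemma inv_sqrt_sub_succ_ge (x : R) : 0 < x ->
  1 / (2 * (x + 1) * sqrt (x + 1)) <= 1 / sqrt x - 1 / sqrt (x + 1).
Proof.
  intros Hx.
  assert (Hu : 0 < sqrt x) by (apply sqrt_lt_R0; lra).
  assert (Hv : 0 < sqrt (x + 1)) by (apply sqrt_lt_R0; lra).
  assert (Huv : sqrt x <= sqrt (x + 1)) by (apply sqrt_le_1_alt; lra).
  replace (1 / sqrt x - 1 / sqrt (x + 1))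
    with ((sqrt (x + 1) - sqrt x) / (sqrt x * sqrt (x + 1))) by (field; lra).
  rewrite sqrt_succ_sub by lra.
  pose proof (sqrt_sqrt (x + 1) ltac:(lra)) as Hvv.
  set (u := sqrt x) in *. set (v := sqrt (x + 1)) in *. rewrite <- Hvv.
  replace (1 / (v + u) / (u * v)) with (1 / ((v + u) * (u * v))) by (field; lra).
  assert (u * v <= v * v) by nra.
  unfold Rdiv. apply Rmult_le_compat_l; [lra|].
  apply Rinv_le_contravar; [apply Rmult_lt_0_compat; nra | nra].
Qed.

Lemma inv_sub_inv_add_sqrt_le (x : R) : 1 <= x ->
  1 / (4 * x) - 1 / (4 * (x + 2 * sqrt (x + 2))) <= 6 * (1 / sqrt x - 1 / sqrt (x + 1)).
Proof.
  intros Hx.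
  pose proof (inv_sqrt_sub_succ_ge x ltac:(lra)).
  assert (Hw : 0 < sqrt (x + 2)) by (apply sqrt_lt_R0; lra).
  assert (Hv : 0 < sqrt (x + 1)) by (apply sqrt_lt_R0; lra).
  pose proof (sqrt_sqrt (x + 2) ltac:(lra)). pose proof (sqrt_sqrt (x + 1) ltac:(lra)).
  assert (Hwv : sqrt (x + 2) * sqrt (x + 1) <= x + 2) by nra.
  enough (1 / (4 * x) - 1 / (4 * (x + 2 * sqrt (x + 2)))
            <= 6 * (1 / (2 * (x + 1) * sqrt (x + 1)))) by lra.
  apply (Rmult_le_reg_r (4 * x * (x + 2 * sqrt (x + 2)) * ((x + 1) * sqrt (x + 1)))).
  { repeat apply Rmult_lt_0_compat; lra. }
  field_simplify; try lra.
  assert (sqrt (x + 2) * sqrt (x + 1) * (x + 1) <= (x + 2) * (x + 1)) by nra.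
  nra.
Qed.

Section Recurrence.

Variable theta : nat -> R.
Hypothesis hpos : forall k : nat, 0 < theta k.
Hypothesis h0 : theta 0%nat = 1.
Hypothesis hrec : forall k : nat, theta (S k) ^ 2 - theta (S k) - theta k ^ 2 = 0.

Lemma theta_succ_factor k :
  (theta (S k) - theta k - 1 / 2) * (theta k + theta (S k) - 1 / 2) = 1 / 4.
Proof. pose proof (hrec k). nra. Qed.

Lemma theta_succ_gt k : theta k + 1 / 2 < theta (S k).
Proof.
  pose proof (hrec k). pose proof (hpos k). pose proof (hpos (S k)).
  pose proof (theta_succ_factor k).
  assert (1 < theta (S k)) by nra.
  nra.
Qed.

Lemma theta_ge k : 1 + INR k / 2 <= theta k.
Proof.
  induction k as [|k IH].
  - simpl. lra.
  - rewrite S_INR. pose proof (theta_succ_gt k). lra.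
Qed.

Lemma theta_succ_sub k :
  theta (S k) - theta k - 1 / 2 = 1 / (4 * (theta k + theta (S k) - 1 / 2)).
Proof.
  pose proof (theta_succ_gt k). pose proof (hpos k).
  apply (Rmult_eq_reg_r (4 * (theta k + theta (S k) - 1 / 2))); [|lra].
  replace ((theta (S k) - theta k - 1 / 2) * (4 * (theta k + theta (S k) - 1 / 2)))
    with (4 * ((theta (S k) - theta k - 1 / 2) * (theta k + theta (S k) - 1 / 2))) by ring.
  rewrite theta_succ_factor. field. lra.
Qed.

Lemma theta_le k : theta k <= INR k / 2 + sqrt (INR k + 1).
Proof.
  induction k as [|k IH].
  - simpl. rewrite h0, Rplus_0_l, sqrt_1. lra.
  - pose proof (theta_succ_sub k). pose proof (theta_ge k). pose proof (theta_ge (S k)).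
    pose proof (pos_INR k). rewrite S_INR in *.
    pose proof (sqrt_succ_sub_ge (INR k + 1) ltac:(lra)).
    assert (1 / (4 * (theta k + theta (S k) - 1 / 2)) <= 1 / (4 * (INR k + 1 + 1))).
    { unfold Rdiv. apply Rmult_le_compat_l; [lra|]. apply Rinv_le_contravar; lra. }
    lra.
Qed.

Definition err (n : nat) : R :=
  theta (S n) - (INR (S n) + 1) / 2 - ln (INR (S n)) / 4.

Lemma err_succ_sub n : err (S n) - err n =
  1 / (4 * (theta (S n) + theta (S (S n)) - 1 / 2))
  - (ln (INR (S n) + 1) - ln (INR (S n))) / 4.
Proof. unfold err. rewrite (S_INR (S n)). pose proof (theta_succ_sub (S n)). lra. Qed.

Lemma theta_succ_add_bounds n :
  INR (S n) + 2 <= theta (S n) + theta (S (S n)) - 1 / 2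
  <= INR (S n) + 2 * sqrt (INR (S n) + 2).
Proof.
  pose proof (theta_ge (S n)). pose proof (theta_ge (S (S n))).
  pose proof (theta_le (S n)). pose proof (theta_le (S (S n))).
  rewrite (S_INR (S n)) in *. pose proof (pos_INR (S n)).
  assert (sqrt (INR (S n) + 1) <= sqrt (INR (S n) + 2)) by (apply sqrt_le_1_alt; lra).
  replace (INR (S n) + 1 + 1) with (INR (S n) + 2) in * by ring.
  lra.
Qed.

Lemma err_decr n : err (S n) <= err n.
Proof.
  pose proof (err_succ_sub n). pose proof (theta_succ_add_bounds n).
  pose proof (lt_0_INR (S n) ltac:(lia)).
  pose proof (ln_succ_sub_bounds (INR (S n)) ltac:(lra)).
  assert (1 / (4 * (theta (S n) + theta (S (S n)) - 1 / 2)) <= 1 / (INR (S n) + 1) / 4).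
  { replace (1 / (INR (S n) + 1) / 4) with (1 / (4 * (INR (S n) + 1))) by (field; lra).
    unfold Rdiv. apply Rmult_le_compat_l; [lra|]. apply Rinv_le_contravar; lra. }
  lra.
Qed.

Lemma err_sub_inv_sqrt_nondecr n :
  err n - 6 / sqrt (INR (S n)) <= err (S n) - 6 / sqrt (INR (S (S n))).
Proof.
  pose proof (err_succ_sub n). pose proof (theta_succ_add_bounds n).
  assert (Hx : 1 <= INR (S n)) by (apply (le_INR 1); lia).
  pose proof (ln_succ_sub_bounds (INR (S n)) ltac:(lra)).
  pose proof (inv_sub_inv_add_sqrt_le (INR (S n)) Hx).
  assert (0 < sqrt (INR (S n) + 2)) by (apply sqrt_lt_R0; lra).
  assert (1 / (4 * (INR (S n) + 2 * sqrt (INR (S n) + 2)))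
          <= 1 / (4 * (theta (S n) + theta (S (S n)) - 1 / 2))).
  { unfold Rdiv. apply Rmult_le_compat_l; [lra|]. apply Rinv_le_contravar; lra. }
  assert (1 / (4 * INR (S n)) = 1 / INR (S n) / 4) by (field; lra).
  rewrite (S_INR (S n)). lra.
Qed.

Lemma err_ge n : err 0 - 6 <= err n.
Proof.
  assert (Hpot : err 0 - 6 <= err n - 6 / sqrt (INR (S n))).
  { induction n as [|n IH].
    - simpl. rewrite sqrt_1. lra.
    - pose proof (err_sub_inv_sqrt_nondecr n). lra. }
  assert (0 < sqrt (INR (S n))) by (apply sqrt_lt_R0, lt_0_INR; lia).
  assert (0 <= 6 / sqrt (INR (S n))) by (apply Rlt_le, Rdiv_lt_0_compat; lra).
  lra.
Qed.

End Recurrence.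

Theorem theorem7 (theta : nat -> R)
  (hpos : forall k : nat, 0 < theta k)
  (h0 : theta 0%nat = 1)
  (hrec : forall k : nat, theta (S k) ^ 2 - theta (S k) - theta k ^ 2 = 0) :
  exists zeta : R,
    is_lim_seq
      (fun k : nat => theta k - ((INR k + zeta + 1) / 2 + ln (INR k) / 4))
      0.
Proof.
  destruct (ex_finite_lim_seq_decr (err theta) _
              (err_decr theta hpos h0 hrec) (err_ge theta hpos h0 hrec)) as [l Hl].
  exists (2 * l).
  apply is_lim_seq_incr_1.
  apply is_lim_seq_ext with (u := fun n => err theta n - l).
  { intros n. unfold err. field. }
  replace (Finite 0) with (Finite (l - l)) by (f_equal; ring).
  apply is_lim_seq_minus'; [exact Hl | apply is_lim_seq_const].
Qed.
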